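(* Let $n>3$ and let $\mathcal{L}\subseteq\mathcal{L}_n$ be a linear subspace that is a Jordan algebra, is invariant under the conjugation action of $S_n$, and contains $\mathrm{Anti}_n$. Then $\mathrm{DS}_n\subseteq\mathcal{L}$.
   Context: $\mathbf{1}\in\mathbb{R}^n$ is the all-ones column vector; $\mathcal{L}_n=\{Q\in \mathrm{Mat}_n(\mathbb{R}): Q\mathbf{1}=0\}$. $\mathrm{DS}_n:=\{Q\in\mathcal{L}_n:\mathbf{1}^TQ=0\}$ (zero row and column sums); $\mathrm{Anti}_n$ is the space of antisymmetric matrices in $\mathcal{L}_n$ (isomorphic as $S_n$-module to the irreducible $\{n-2,1^2\}$). For $\sigma\in S_n$, $K_\sigma$ is the permutation matrix with $e_iK_\sigma=e_{\sigma(i)}$, and $S_n$ acts by $\sigma\cdot X=K_\sigma^TXK_\sigma$. A Jordan algebra is a subspace closed under $AB+BA$. *)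

From mathcomp Require Import all_boot all_order all_algebra all_fingroup.
From mathcomp Require Import reals.
Set Implicit Arguments. Unset Strict Implicit. Unset Printing Implicit Defensive.
Import GRing.Theory Num.Theory.
Local Open Scope ring_scope.

Definition ones (R : realType) (n : nat) : 'cV[R]_n := const_mx 1.

Definition inLn (R : realType) (n : nat) (Q : 'M[R]_n) : Prop :=
  Q *m ones R n = 0.

Definition inDS (R : realType) (n : nat) (Q : 'M[R]_n) : Prop :=
  inLn Q /\ (ones R n)^T *m Q = 0.

Definition inAnti (R : realType) (n : nat) (Q : 'M[R]_n) : Prop :=
  inLn Q /\ Q^T = - Q.

(* K_sigma with e_i K_sigma = e_{sigma(i)}, i.e. (K_sigma) i j = (sigma i == j);
   this is mathcomp's perm_mx. Action: sigma . X = K_sigma^T X K_sigma. *)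
Definition Kperm (R : realType) (n : nat) (s : 'S_n) : 'M[R]_n := perm_mx s.
Definition sact (R : realType) (n : nat) (s : 'S_n) (X : 'M[R]_n) : 'M[R]_n :=
  (Kperm R s)^T *m X *m Kperm R s.

Definition jordan_closed (R : realType) (n : nat) (L : {vspace 'M[R]_n}) : Prop :=
  forall A B, A \in L -> B \in L -> A *m B + B *m A \in L.

From mathcomp Require Import all_boot all_order all_algebra all_fingroup.
From mathcomp Require Import reals zify ring.
Set Implicit Arguments. Unset Strict Implicit. Unset Printing Implicit Defensive.
Import GRing.Theory Num.Theory.
Local Open Scope ring_scope.

(* Write Q = (Q - Q^T)/2 + (Q + Q^T)/2.  For Q in DS_n the first summand is
   antisymmetric with zero row sums, hence lies in Anti_n, which is in L.
   For the second summand we use the identity, valid for every matrix with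
   zero row and column sums,
       Q + Q^T = - sum_{i,j} Q_ij (e_i - e_j)(e_i - e_j)^T,
   so it suffices that every D_ij = (e_i - e_j)(e_i - e_j)^T lies in L.
   Since L is a Jordan algebra over a field of characteristic 0 it is closed
   under squaring.  For orthogonal zero-sum vectors x, y with |x|^2 = a and
   |y|^2 = b, the matrix x y^T - y x^T lies in Anti_n and its square is
   -(b x x^T + a y y^T).  Picking two further indices k, l (here n > 3 is
   used) and the three pairwise orthogonal vectors e_i - e_j, e_k - e_l and
   e_k + e_l - e_i - e_j, a linear combination of three such squares isolates
   D_ij. *)

Lemma wedge_sqr (R : comPzRingType) (n : nat) (x y : 'cV[R]_n) (a b : R) :
  x^T *m x = a%:M -> y^T *m y = b%:M -> x^T *m y = 0 ->
  (x *m y^T - y *m x^T) *m (x *m y^T - y *m x^T)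
    = - (b *: (x *m x^T) + a *: (y *m y^T)).
Proof.
move=> xx yy xy.
have yx : y^T *m x = 0 by rewrite -[y^T *m x]trmxK trmx_mul trmxK xy trmx0.
have outer_mul (p q r s : 'cV[R]_n) :
    p *m q^T *m (r *m s^T) = p *m (q^T *m r) *m s^T by rewrite !mulmxA.
rewrite mulmxBl !mulmxBr !outer_mul xx yy xy yx !mulmx0 !mul0mx.
by rewrite !mul_mx_scalar -!scalemxAl !subr0 sub0r opprD.
Qed.

Section DSInJordan.
Variables (R : realType) (n : nat).

Definition ev (i : 'I_n) : 'cV[R]_n := delta_mx i 0.

Lemma ev_dot i j : (ev i)^T *m ev j = (i == j)%:R%:M.
Proof.
rewrite /ev trmx_delta mul_delta_mx_cond; apply/matrixP=> x y.
by rewrite !ord1; case: (i == j); rewrite !mxE.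
Qed.

Lemma ev_outer i j : ev i *m (ev j)^T = delta_mx i j.
Proof. by rewrite /ev trmx_delta mul_delta_mx. Qed.

Lemma ev_ones i : (ev i)^T *m ones R n = 1%:M.
Proof. by rewrite /ev trmx_delta -rowE; apply/matrixP=> x y; rewrite !ord1 !mxE. Qed.

Lemma ev_diff_ones i j : (ev i - ev j)^T *m ones R n = 0.
Proof. by rewrite raddfB /= mulmxBl !ev_ones subrr. Qed.

Lemma wedge_anti (x y : 'cV[R]_n) :
  x^T *m ones R n = 0 -> y^T *m ones R n = 0 -> inAnti (x *m y^T - y *m x^T).
Proof.
move=> x1 y1; split; last by rewrite raddfB /= !trmx_mul !trmxK opprB.
by rewrite /inLn mulmxBl -!mulmxA x1 y1 !mulmx0 subrr.
Qed.

Lemma antisym_sym_split (Q : 'M[R]_n) :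
  Q = 2^-1 *: (Q - Q^T) + 2^-1 *: (Q + Q^T).
Proof. by apply/matrixP=> p q; rewrite !mxE; field. Qed.

Lemma DS_antisym_part (Q : 'M[R]_n) : inDS Q -> inAnti (Q - Q^T).
Proof.
case=> Q1 Q1T; split; last by rewrite raddfB /= trmxK opprB.
by rewrite /inLn mulmxBl Q1 sub0r -[Q^T *m _]trmxK trmx_mul trmxK Q1T trmx0 oppr0.
Qed.

(* Zero row sums (resp. column sums) kill the diagonal terms of the
   expansion of sum_{i,j} Q_ij (e_i - e_j)(e_i - e_j)^T. *)
Lemma row_sums0 (Q : 'M[R]_n) :
  inLn Q -> \sum_i \sum_j Q i j *: delta_mx i i = 0 :> 'M[R]_n.
Proof.
move=> Q1; apply: big1 => i _; rewrite -scaler_suml.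
have := congr1 (fun M : 'cV[R]_n => M i 0) Q1; rewrite !mxE => Qi.
suff -> : \sum_j Q i j = 0 by rewrite scale0r.
by rewrite -[RHS]Qi; apply: eq_bigr => j _; rewrite /ones mxE mulr1.
Qed.

Lemma col_sums0 (Q : 'M[R]_n) :
  (ones R n)^T *m Q = 0 -> \sum_i \sum_j Q i j *: delta_mx j j = 0 :> 'M[R]_n.
Proof.
move=> Q1T; rewrite exchange_big; apply: big1 => j _; rewrite -scaler_suml.
have := congr1 (fun M : 'rV[R]_n => M 0 j) Q1T; rewrite !mxE => Qj.
suff -> : \sum_i Q i j = 0 by rewrite scale0r.
by rewrite -[RHS]Qj; apply: eq_bigr => i _; rewrite /ones !mxE mul1r.
Qed.

Lemma DS_sym_decomp (Q : 'M[R]_n) : inDS Q ->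
  Q + Q^T = - \sum_i \sum_j Q i j *: ((ev i - ev j) *m (ev i - ev j)^T).
Proof.
case=> Q1 Q1T.
have Qsum : \sum_i \sum_j Q i j *: delta_mx i j = Q by rewrite -matrix_sum_delta.
have QTsum : \sum_i \sum_j Q i j *: delta_mx j i = Q^T.
  rewrite [RHS]matrix_sum_delta exchange_big; apply: eq_bigr => i _.
  by apply: eq_bigr => j _; rewrite mxE.
have -> : \sum_i \sum_j Q i j *: ((ev i - ev j) *m (ev i - ev j)^T) =
    \sum_i (\sum_j Q i j *: delta_mx i i + \sum_j Q i j *: delta_mx j j
       - \sum_j Q i j *: delta_mx i j - \sum_j Q i j *: delta_mx j i).
  apply: eq_bigr => i _; rewrite -big_split -!sumrB /=; apply: eq_bigr => j _.
  rewrite raddfB /= mulmxBl !mulmxBr !ev_outer.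
  by apply/matrixP=> p q; rewrite !mxE; ring.
rewrite !sumrB big_split /= row_sums0 // col_sums0 // Qsum QTsum.
by apply/matrixP=> p q; rewrite !mxE; ring.
Qed.

Variable L : {vspace 'M[R]_n}.
Hypothesis jordanL : jordan_closed L.
Hypothesis antiL : forall Q : 'M[R]_n, inAnti Q -> Q \in L.

Lemma jordan_sqr A : A \in L -> A *m A \in L.
Proof.
move=> AL; have -> : A *m A = 2^-1 *: (A *m A + A *m A).
  by apply/matrixP=> p q; rewrite !mxE; field.
by rewrite memvZ // jordanL.
Qed.

Lemma proj_pair_in (x y : 'cV[R]_n) (a b : R) :
  x^T *m ones R n = 0 -> y^T *m ones R n = 0 ->
  x^T *m x = a%:M -> y^T *m y = b%:M -> x^T *m y = 0 ->
  b *: (x *m x^T) + a *: (y *m y^T) \in L.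
Proof.
move=> x1 y1 xx yy xy; rewrite -memvN -(wedge_sqr xx yy xy).
exact/jordan_sqr/antiL/wedge_anti.
Qed.

Local Ltac gram distinct :=
  rewrite ?raddfB ?raddfD /= ?mulmxBl ?mulmxDl ?mulmxBr ?mulmxDr !ev_dot
    ?eqxx ?distinct;
  apply/matrixP=> p q; rewrite !ord1 !mxE /=; ring.

Lemma diff_proj_in (n_gt3 : (3 < n)%N) i j :
  (ev i - ev j) *m (ev i - ev j)^T \in L.
Proof.
have [->|ij] := eqVneq i j; first by rewrite subrr mul0mx mem0v.
have : (1 < #|~: [set i; j]|)%N.
  by have := cardsC [set i; j]; rewrite cards2 ij card_ord; lia.
case/card_gt1P => k [l [+ + kl]]; rewrite !inE !negb_or => /andP[ki kj] /andP[li lj].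
have neq (x y : 'I_n) : x != y -> ((x == y) = false) * ((y == x) = false).
  by move=> xy; split; apply: negbTE; rewrite // eq_sym.
have distinct := (neq _ _ ij, neq _ _ kl, neq _ _ ki, neq _ _ kj, neq _ _ li, neq _ _ lj).
set v := ev i - ev j; set u := ev k - ev l; set w := ev k + ev l - ev i - ev j.
have w1 : w^T *m ones R n = 0.
  rewrite /w !raddfB raddfD /= !mulmxBl mulmxDl !ev_ones.
  by apply/matrixP=> p q; rewrite !mxE; ring.
have vv : v^T *m v = 2%:M by gram distinct.
have uu : u^T *m u = 2%:M by gram distinct.
have ww : w^T *m w = 4%:M by gram distinct.
have uv : u^T *m v = 0 by gram distinct.
have wv : w^T *m v = 0 by gram distinct.
have uw : u^T *m w = 0 by gram distinct.
have P_uv := proj_pair_in (ev_diff_ones _ _) (ev_diff_ones _ _) uu vv uv.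
have P_wv := proj_pair_in w1 (ev_diff_ones _ _) ww vv wv.
have P_uw := proj_pair_in (ev_diff_ones _ _) w1 uu ww uw.
(* 8 v v^T = 2 P_uv + P_wv - P_uw. *)
have -> : v *m v^T = 8^-1 *: (2 *: (2 *: (u *m u^T) + 2 *: (v *m v^T))
   + (2 *: (w *m w^T) + 4 *: (v *m v^T)) - (4 *: (u *m u^T) + 2 *: (w *m w^T))).
  set U := u *m u^T; set V := v *m v^T; set W := w *m w^T.
  by apply/matrixP=> p q; rewrite !mxE; field.
by rewrite memvZ // memvB // memvD // memvZ.
Qed.

End DSInJordan.

Theorem mainTheorem16 (R : realType) (n : nat) (L : {vspace 'M[R]_n}) :
  (3 < n)%N ->
  (forall Q : 'M[R]_n, Q \in L -> inLn Q) ->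
  jordan_closed L ->
  (forall (s : 'S_n) (X : 'M[R]_n), X \in L -> sact s X \in L) ->
  (forall Q : 'M[R]_n, inAnti Q -> Q \in L) ->
  forall Q : 'M[R]_n, inDS Q -> Q \in L.
Proof.
move=> n_gt3 _ jordanL _ antiL Q DSQ.
rewrite (antisym_sym_split Q) memvD // memvZ //; first exact/antiL/DS_antisym_part.
rewrite DS_sym_decomp // memvN; apply: memv_suml => i _; apply: memv_suml => j _.
exact/memvZ/diff_proj_in.
Qed.
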